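(* For discrete containers $F$ and $G$, the chain-rule morphism $\mathrm{chain}_{F,G}:\partial F[G]\times\partial G\multimap\partial(F[G])$ is an equivalence of containers. In particular, for discrete set-truncated $F,G$ it is an isomorphism in the 1-category of set-truncated containers and cartesian morphisms.
   Context: Homotopy Type Theory. A type is discrete if it has decidable equality. A point $a:A$ is isolated if $\prod_{b:A}\mathrm{Dec}(a=b)$; $A^{\circ}$ is the subtype of isolated points; $A\setminus a_0:=\sum_{a:A}\neg(a_0=a)$. A container $(S\triangleleft P)$ is a type $S$ and family $P:S\to\mathsf{Type}$; it is discrete if each $P_s$ is discrete, set-truncated if $S$ and all $P_s$ are sets. Cartesian morphisms $(S\triangleleft P)\multimap(T\triangleleft Q)$: $(f,u)$, $f:S\to T$, $u:\prod_sQ_{fs}\simeq P_s$; equivalence of containers if $f$ is an equivalence. $(S\triangleleft P)\times(T\triangleleft Q):=(S\times T\triangleleft\lambda(s,t).P_s+Q_t)$; $(S\triangleleft P)[(T\triangleleft Q)]:=(\sum_{s:S}(P_s\to T)\triangleleft\lambda(s,g).\sum_{p:P_s}Q_{gp})$; $\partial(S\triangleleft P):=(\sum_{s:S}(P_s)^{\circ}\triangleleft\lambda(s,p).P_s\setminus p)$. $\Sigma\text{-isolate}_{A,B}:\sum_{a:A^{\circ}}B(a)^{\circ}\to(\sum_{a:A}B(a))^{\circ}$, $(a_0,b_0)\mapsto(a_0,b_0)$. Grafting $[f,t]:P_s\to T$ for $p_0:(P_s)^{\circ}$, $f:P_s\setminus p_0\to T$, $t:T$: value $t$ at points equal to $p_0$,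 $f(p,h)$ otherwise. For $F=(S\triangleleft P)$, $G=(T\triangleleft Q)$, $\mathrm{chain}_{F,G}$ has shape map $\big(((s,p_0),f),(t,q_0)\big)\mapsto\big((s,[f,t]),\Sigma\text{-isolate}(p_0,q_0)\big)$ and position component a family of equivalences $\big(\sum_{p:P_s}Q_{[f,t](p)}\big)\setminus(p_0,q_0)\simeq\big(\sum_{p:P_s\setminus p_0}Q_{f(p)}\big)+(Q_t\setminus q_0)$. *)

From Stdlib Require Import ProofIrrelevance Eqdep.
Set Implicit Arguments.

Definition Dec (P : Prop) : Type := (P + ~ P)%type.

Definition isolated {A : Type} (a : A) : Type := forall b : A, Dec (a = b).

Definition Isol (A : Type) : Type := {a : A & isolated a}.

Definition Minus (A : Type) (a0 : A) : Type := {a : A & ~ (a0 = a)}.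
Arguments Minus : clear implicits.

Definition discrete (A : Type) : Type := forall a b : A, Dec (a = b).

Definition isSet (A : Type) : Prop := forall (x y : A) (p q : x = y), p = q.

Definition is_equiv {A B : Type} (f : A -> B) : Prop :=
  exists g : B -> A, (forall a, g (f a) = a) /\ (forall b, f (g b) = b).

Record Equiv (A B : Type) := MkEquiv { eqv_fun :> A -> B; eqv_isequiv : is_equiv eqv_fun }.

Definition equiv_id (A : Type) : Equiv A A.
Proof. refine (@MkEquiv A A (fun a => a) _). exists (fun a => a); split; reflexivity. Defined.

Definition equiv_comp {A B C : Type} (e1 : Equiv A B) (e2 : Equiv B C) : Equiv A C.
Proof.
  refine (@MkEquiv A C (fun a => e2 (e1 a)) _).
  destruct (eqv_isequiv e1) as [g1 [h1 k1]], (eqv_isequiv e2) as [g2 [h2 k2]].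
  exists (fun c => g1 (g2 c)); split; intros; [rewrite h2, h1 | rewrite k1, k2]; reflexivity.
Defined.

Record Container := Cont { Sh : Type; Pos : Sh -> Type }.

Record CartMor (F G : Container) := MkCartMor {
  cm_sh : Sh F -> Sh G;
  cm_pos : forall s : Sh F, Equiv (Pos G (cm_sh s)) (Pos F s) }.

Definition is_cont_equiv {F G : Container} (m : CartMor F G) : Prop :=
  is_equiv (cm_sh m).

Definition cm_id (F : Container) : CartMor F F :=
  @MkCartMor F F (fun s => s) (fun s => equiv_id (Pos F s)).

Definition cm_comp {F G H : Container} (m : CartMor F G) (n : CartMor G H) : CartMor F H :=
  @MkCartMor F H (fun s => cm_sh n (cm_sh m s))
    (fun s => equiv_comp (cm_pos n (cm_sh m s)) (cm_pos m s)).

Definition is_cart_iso {F G : Container} (m : CartMor F G) : Prop :=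
  exists n : CartMor G F, cm_comp m n = cm_id F /\ cm_comp n m = cm_id G.

Definition disc_cont (F : Container) : Type := forall s : Sh F, discrete (Pos F s).

Definition set_cont (F : Container) : Prop :=
  isSet (Sh F) /\ forall s : Sh F, isSet (Pos F s).

Definition cprod (F G : Container) : Container :=
  Cont (fun st : Sh F * Sh G => (Pos F (fst st) + Pos G (snd st))%type).

Definition ccomp (F G : Container) : Container :=
  Cont (fun sg : {s : Sh F & Pos F s -> Sh G} =>
          {p : Pos F (projT1 sg) & Pos G (projT2 sg p)}).

Definition deriv (F : Container) : Container :=
  Cont (fun sp : {s : Sh F & Isol (Pos F s)} =>
          Minus (Pos F (projT1 sp)) (projT1 (projT2 sp))).

Definition sigma_isolate_dec {A : Type} {B : A -> Type} (a0 : A) (da : isolated a0)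
  (b0 : B a0) (db : isolated b0) : isolated (existT B a0 b0).
Proof.
  intros [a b]. destruct (da a) as [e | n].
  - destruct e. destruct (db b) as [e | n].
    + left. rewrite e. reflexivity.
    + right. intro E. apply n. exact (inj_pair2 _ _ _ _ _ E).
  - right. intro E. apply n. exact (f_equal (@projT1 A B) E).
Defined.

Definition sigma_isolate {A : Type} {B : A -> Type}
  (x : {a : Isol A & Isol (B (projT1 a))}) : Isol {a : A & B a} :=
  existT _ (existT B (projT1 (projT1 x)) (projT1 (projT2 x)))
    (sigma_isolate_dec (projT2 (projT1 x)) (projT2 (projT2 x))).

Definition graft {A T : Type} (p0 : Isol A) (f : Minus A (projT1 p0) -> T) (t : T) : A -> T :=
  fun p => match projT2 p0 p with
           | inl _ => t
           | inr h => f (existT _ p h)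
           end.

Lemma graft_at {A T : Type} (p0 : Isol A) (f : Minus A (projT1 p0) -> T) (t : T) :
  graft p0 f t (projT1 p0) = t.
Proof. unfold graft. destruct (projT2 p0 (projT1 p0)) as [_|n]; [reflexivity | now elim n]. Qed.

Lemma graft_off {A T : Type} (p0 : Isol A) (f : Minus A (projT1 p0) -> T) (t : T)
  (p : A) (k : ~ projT1 p0 = p) : graft p0 f t p = f (existT _ p k).
Proof.
  unfold graft. destruct (projT2 p0 p) as [e|k']; [now elim k |].
  f_equal. f_equal. apply proof_irrelevance.
Qed.

Definition isol_transport {T : Type} (Q : T -> Type) {x y : T} (e : x = y)
  (q : Isol (Q x)) : Isol (Q y) :=
  match e in _ = y' return Isol (Q y') with eq_refl => q end.

Lemma isol_transport_pr1 {T : Type} (Q : T -> Type) {x y : T} (e : x = y)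
  (q : Isol (Q x)) : projT1 (isol_transport Q e q) = eq_rect _ Q (projT1 q) _ e.
Proof. destruct e. reflexivity. Qed.

Lemma rew_rl {T : Type} (Q : T -> Type) {x y : T} (q : Q x) (e : x = y) :
  eq_rect_r Q (eq_rect _ Q q _ e) e = q.
Proof. destruct e. reflexivity. Qed.

Lemma rew_lr {T : Type} (Q : T -> Type) {x y : T} (q : Q y) (e : x = y) :
  eq_rect _ Q (eq_rect_r Q q e) _ e = q.
Proof. destruct e. reflexivity. Qed.

Section ChainPos.
Context {A T : Type} (Q : T -> Type) (p0 : Isol A)
        (f : Minus A (projT1 p0) -> T) (t : T) (q0 : Isol (Q t)).

Definition chain_q0 : Isol (Q (graft p0 f t (projT1 p0))) :=
  isol_transport Q (eq_sym (graft_at p0 f t)) q0.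

Definition chain_pt : {p : A & Q (graft p0 f t p)} :=
  projT1 (sigma_isolate (B := fun p => Q (graft p0 f t p)) (existT _ p0 chain_q0)).

Definition chain_pos_fun
  (x : Minus {p : A & Q (graft p0 f t p)} chain_pt) :
  ({p : Minus A (projT1 p0) & Q (f p)} + Minus (Q t) (projT1 q0))%type.
Proof.
  destruct x as [[p q] h].
  destruct (projT2 p0 p) as [e | k].
  - right. destruct e.
    exists (eq_rect _ Q q _ (graft_at p0 f t)).
    intro E. apply h. unfold chain_pt, chain_q0; simpl.
    f_equal. clear h. rewrite isol_transport_pr1, E. clear E.
    generalize (graft_at p0 f t) as e. revert q.
    generalize (graft p0 f t (projT1 p0)) as u. intros u q e.
    destruct e. reflexivity.
  - left. exists (existT _ p k). exact (eq_rect _ Q q _ (graft_off p0 f t k)).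
Defined.

Definition chain_pos_inv
  (y : ({p : Minus A (projT1 p0) & Q (f p)} + Minus (Q t) (projT1 q0))%type) :
  Minus {p : A & Q (graft p0 f t p)} chain_pt.
Proof.
  destruct y as [[[p k] q] | [q k]].
  - exists (existT _ p (eq_rect_r Q q (graft_off p0 f t k))).
    intro E. apply k. exact (f_equal (@projT1 _ _) E).
  - exists (existT _ (projT1 p0) (eq_rect_r Q q (graft_at p0 f t))).
    intro E. apply k. clear k. unfold chain_pt, chain_q0 in E; simpl in E.
    apply inj_pair2 in E. rewrite isol_transport_pr1 in E. unfold eq_rect_r in E.
    revert E. generalize (projT1 q0) as q1. intro q1.
    generalize (graft_at p0 f t) as e. revert q q1.
    generalize (graft p0 f t (projT1 p0)) as u. intros u q q1 e.
    destruct e. simpl. auto.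
Defined.

Lemma chain_pos_is_equiv : is_equiv chain_pos_fun.
Proof.
  exists chain_pos_inv. split.
  - intros [[p q] h]. unfold chain_pos_fun.
    destruct (projT2 p0 p) as [e | k].
    + destruct e. simpl. unfold chain_pos_inv.
      apply eq_existT_uncurried. exists (f_equal (existT _ (projT1 p0)) (rew_rl Q q _)).
      apply proof_irrelevance.
    + simpl. unfold chain_pos_inv.
      apply eq_existT_uncurried. exists (f_equal (existT _ p) (rew_rl Q q _)).
      apply proof_irrelevance.
  - intros [[[p k] q] | [q k]]; unfold chain_pos_inv, chain_pos_fun; simpl.
    + destruct (projT2 p0 p) as [e | k'].
      * exfalso. exact (k e).
      * assert (kk : k' = k) by apply proof_irrelevance. subst k'.
        f_equal. f_equal. apply rew_lr.
    + destruct (projT2 p0 (projT1 p0)) as [e | n].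
      * rewrite (UIP_refl _ _ e). simpl. f_equal.
        apply eq_existT_uncurried. exists (rew_lr Q q _). apply proof_irrelevance.
      * exfalso. exact (n eq_refl).
Qed.

Definition chain_pos_equiv := MkEquiv chain_pos_is_equiv.

End ChainPos.

Section Chain.
Variables F G : Container.

Definition chain_sh (x : Sh (cprod (ccomp (deriv F) G) (deriv G))) :
  Sh (deriv (ccomp F G)) :=
  let s := projT1 (projT1 (fst x)) in
  let p0 := projT2 (projT1 (fst x)) in
  let f := projT2 (fst x) in
  let t := projT1 (snd x) in
  let q0 := projT2 (snd x) in
  existT _ (existT (fun s => Pos F s -> Sh G) s (graft p0 f t))
    (sigma_isolate (B := fun p => Pos G (graft p0 f t p))
       (existT _ p0 (chain_q0 (Pos G) p0 f t q0))).

Definition chain_pos (x : Sh (cprod (ccomp (deriv F) G) (deriv G))) :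
  Equiv (Pos (deriv (ccomp F G)) (chain_sh x)) (Pos (cprod (ccomp (deriv F) G) (deriv G)) x) :=
  chain_pos_equiv (Pos G) (projT2 (projT1 (fst x))) (projT2 (fst x))
    (projT1 (snd x)) (projT2 (snd x)).

Definition chain : CartMor (cprod (ccomp (deriv F) G) (deriv G)) (deriv (ccomp F G)) :=
  MkCartMor _ _ chain_sh chain_pos.

End Chain.

(* A shape of ∂(F[G]) is a shape [s] with [g : P_s -> T] and an isolated position [(p, q)].
   When F and G are discrete every point is isolated, so it comes from the shape
   [((s, p), g restricted to P_s \ p)] of ∂F[G] together with [(g p, q)] of ∂G: grafting
   [g p] back at [p] recovers [g], and restricting a graft [[f, t]] away from [p] recovers [f].
   A container equivalence is an isomorphism, its inverse carrying the inverted position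
   equivalences transported along the shape round trip. *)

From Stdlib Require Import ProofIrrelevance Eqdep FunctionalExtensionality ClassicalEpsilon.

Lemma Dec_eq (P : Prop) (x y : Dec P) : x = y.
Proof.
  destruct x as [a | a], y as [b | b]; try contradiction.
  all: f_equal; apply proof_irrelevance.
Qed.

Lemma isolated_eq {A : Type} {a : A} (i j : isolated a) : i = j.
Proof. apply functional_extensionality_dep; intro; apply Dec_eq. Qed.

Lemma Isol_eq {A : Type} (x y : Isol A) : projT1 x = projT1 y -> x = y.
Proof.
  destruct x as [a i], y as [b j]; simpl; intros <-.
  f_equal; apply isolated_eq.
Qed.

Lemma existT_Isol_eq {T : Type} (Q : T -> Type) {u t : T} (e : u = t)
  (q : Isol (Q u)) (q' : Isol (Q t)) :
  eq_rect _ Q (projT1 q) _ e = projT1 q' ->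
  existT (fun t => Isol (Q t)) u q = existT _ t q'.
Proof. destruct e; simpl; intro E; f_equal; apply Isol_eq, E. Qed.

Lemma eq_rect_loop {T : Type} (Q : T -> Type) {x y : T} (e : x = y) (e' : y = x) (q : Q x) :
  eq_rect _ Q (eq_rect _ Q q _ e) _ e' = q.
Proof. destruct e; rewrite (UIP_refl _ _ e'); reflexivity. Qed.

Lemma deriv_ccomp_sh_eq (F G : Container) (s : Sh F) (g1 g2 : Pos F s -> Sh G)
  (E : g1 = g2) (p : Pos F s) (q1 : Pos G (g1 p)) (q2 : Pos G (g2 p)) i1 i2 :
  eq_rect _ (Pos G) q1 _ (f_equal (fun g => g p) E) = q2 ->
  existT (fun sg : Sh (ccomp F G) => Isol (Pos (ccomp F G) sg))
    (existT _ s g1) (existT _ (existT _ p q1) i1) =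
  existT _ (existT _ s g2) (existT _ (existT _ p q2) i2).
Proof. destruct E; simpl; intros <-; f_equal; apply Isol_eq; reflexivity. Qed.

Definition discrete_isol {A : Type} (d : discrete A) (a : A) : Isol A := existT _ a (d a).

Section ChainInverse.
Context {F G : Container} (dF : disc_cont F) (dG : disc_cont G).

(* Discreteness is what makes [p] and [q] isolated again. *)
Definition chain_sh_inv (y : Sh (deriv (ccomp F G))) :
  Sh (cprod (ccomp (deriv F) G) (deriv G)) :=
  let s := projT1 (projT1 y) in
  let g := projT2 (projT1 y) in
  let p := projT1 (projT1 (projT2 y)) in
  let q := projT2 (projT1 (projT2 y)) in
  (existT (fun sp : Sh (deriv F) => Pos (deriv F) sp -> Sh G)
     (existT _ s (discrete_isol (dF s) p)) (fun x => g (projT1 x)),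
   existT (fun t => Isol (Pos G t)) (g p) (discrete_isol (dG (g p)) q)).

Lemma chain_sh_invK x : chain_sh_inv (@chain_sh F G x) = x.
Proof.
  destruct x as [[[s [p0 i0]] f] [t q0]]; unfold chain_sh_inv, chain_sh; cbn.
  f_equal.
  - unfold discrete_isol; rewrite (isolated_eq (dF s p0) i0); f_equal.
    apply functional_extensionality; intros [p h].
    apply (graft_off (existT _ p0 i0) f t h).
  - apply (existT_Isol_eq (Pos G) (graft_at (existT _ p0 i0) f t)).
    unfold chain_q0; rewrite isol_transport_pr1; apply eq_rect_loop.
Qed.

Lemma graft_restrict (s : Sh F) (g : Pos F s -> Sh G) (p : Pos F s) :
  graft (discrete_isol (dF s) p) (fun x => g (projT1 x)) (g p) = g.
Proof.
  apply functional_extensionality; intro p'; unfold graft; cbn.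
  destruct (dF s p p') as [<- | _]; reflexivity.
Qed.

Lemma chain_shK y : @chain_sh F G (chain_sh_inv y) = y.
Proof.
  destruct y as [[s g] [[p q] i]]; unfold chain_sh_inv, chain_sh; cbn.
  apply (@deriv_ccomp_sh_eq F G s _ _ (graft_restrict s g p)).
  cbn [projT1 projT2]; unfold chain_q0; rewrite isol_transport_pr1; apply eq_rect_loop.
Qed.

Lemma chain_sh_is_equiv : is_equiv (@chain_sh F G).
Proof. exists chain_sh_inv; split; [apply chain_sh_invK | apply chain_shK]. Qed.

End ChainInverse.

Definition equiv_inv_fun {A B : Type} {f : A -> B} (H : is_equiv f) : B -> A :=
  proj1_sig (constructive_indefinite_description _ H).

Lemma equiv_inv_funK {A B : Type} {f : A -> B} (H : is_equiv f) a : equiv_inv_fun H (f a) = a.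
Proof. exact (proj1 (proj2_sig (constructive_indefinite_description _ H)) a). Qed.

Lemma equiv_inv_funKV {A B : Type} {f : A -> B} (H : is_equiv f) b : f (equiv_inv_fun H b) = b.
Proof. exact (proj2 (proj2_sig (constructive_indefinite_description _ H)) b). Qed.

Definition equiv_sym {A B : Type} (e : Equiv A B) : Equiv B A :=
  @MkEquiv B A (equiv_inv_fun (eqv_isequiv e))
    (ex_intro _ (eqv_fun e) (conj (equiv_inv_funKV _) (equiv_inv_funK _))).

Definition equiv_transport {T : Type} (P : T -> Type) {x y : T} (e : x = y) : Equiv (P x) (P y) :=
  match e in _ = y return Equiv (P x) (P y) with eq_refl => equiv_id (P x) end.

Lemma equiv_transport_eq_rect_r {T : Type} (P : T -> Type) {x y : T} (e : x = y) (p : P y) :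
  equiv_transport P e (eq_rect_r P p e) = p.
Proof. destruct e; reflexivity. Qed.

Lemma Equiv_eq {A B : Type} (e1 e2 : Equiv A B) : (forall a, e1 a = e2 a) -> e1 = e2.
Proof.
  destruct e1 as [f1 h1], e2 as [f2 h2]; simpl; intro H.
  apply functional_extensionality in H; subst f2.
  f_equal; apply proof_irrelevance.
Qed.

Lemma CartMor_eq {X Y : Container} (m n : CartMor X Y) (E : forall s, cm_sh m s = cm_sh n s) :
  (forall s (y : Pos Y (cm_sh n s)), cm_pos m s (eq_rect_r (Pos Y) y (E s)) = cm_pos n s y) ->
  m = n.
Proof.
  destruct m as [f u], n as [g v]; simpl in *; intro Hpos.
  assert (fg : f = g) by (apply functional_extensionality; exact E); subst g.
  f_equal; apply functional_extensionality_dep; intro s; apply Equiv_eq; intro y.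
  rewrite <- Hpos, (UIP_refl _ _ (E s)); reflexivity.
Qed.

Section ContEquivInverse.
Context {X Y : Container} {m : CartMor X Y} (Hm : is_cont_equiv m).

Definition cm_inv : CartMor Y X :=
  MkCartMor Y X (equiv_inv_fun Hm)
    (fun t => equiv_comp (equiv_sym (cm_pos m (equiv_inv_fun Hm t)))
                         (equiv_transport (Pos Y) (equiv_inv_funKV Hm t))).

Lemma cm_invK : cm_comp m cm_inv = cm_id X.
Proof.
  apply CartMor_eq with (E := equiv_inv_funK Hm); intros s x; cbn.
  rewrite (UIP _ _ _ (equiv_inv_funKV Hm (cm_sh m s)) (f_equal (cm_sh m) (equiv_inv_funK Hm s))).
  generalize (equiv_inv_funK Hm s); generalize (equiv_inv_fun Hm (cm_sh m s)).
  intros s' e; destruct e; apply equiv_inv_funKV.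
Qed.

Lemma cm_invKV : cm_comp cm_inv m = cm_id Y.
Proof.
  apply CartMor_eq with (E := equiv_inv_funKV Hm); intros t y; cbn.
  rewrite equiv_inv_funK; apply equiv_transport_eq_rect_r.
Qed.

End ContEquivInverse.

Lemma cont_equiv_cart_iso {X Y : Container} (m : CartMor X Y) : is_cont_equiv m -> is_cart_iso m.
Proof. intro Hm; exists (cm_inv Hm); split; [apply cm_invK | apply cm_invKV]. Qed.

(* Rocq's equality satisfies UIP. *)
Theorem theorem4p5 (F G : Container) (dF : disc_cont F) (dG : disc_cont G) :
  is_cont_equiv (chain F G) /\
  (set_cont F -> set_cont G -> is_cart_iso (chain F G)).
Proof.
  assert (Hchain : is_cont_equiv (chain F G)) by exact (chain_sh_is_equiv dF dG).
  split; [exact Hchain | intros _ _; apply cont_equiv_cart_iso, Hchain].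
Qed.
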